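(* For $n>2$, the groups $G_{n,\mathcal{D}}^2$ and $G_{n+1}^2/N$ are isomorphic, where $N$ is the normal subgroup of $G_{n+1}^2$ generated by all commutators $a_{i(n+1)}a_{j(n+1)}a_{i(n+1)}^{-1}a_{j(n+1)}^{-1}$, $i,j\in\{1,\dots,n\}$.
   Context: $G_{N}^2$ is the group with generators $a_{ij}=a_{\{i,j\}}$ for $2$-element subsets $\{i,j\}\subset\{1,\dots,N\}$ and relations $a_{ij}^2=1$; $a_{ij}a_{kl}=a_{kl}a_{ij}$ for distinct $i,j,k,l$; $a_{ij}a_{ik}a_{jk}=a_{jk}a_{ik}a_{ij}$ for distinct $i,j,k$. $G_{n,\mathcal{D}}^2$ has generators $a_{ij}$ ($\{i,j\}\subset\{1,\dots,n\}$) and $\tau_i$ ($1\le i\le n$) with relations: $a_{ij}^2=1$; $a_{ij}a_{kl}=a_{kl}a_{ij}$ for distinct $i,j,k,l$; $a_{ij}a_{ik}a_{jk}=a_{jk}a_{ik}a_{ij}$ for distinct $i,j,k$; $\tau_i^2=1$; $\tau_i\tau_j=\tau_j\tau_i$; $\tau_i\tau_ja_{ij}\tau_j\tau_i=a_{ij}$; $a_{ij}\tau_k=\tau_ka_{ij}$ for distinct $i,j,k$. *)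

From mathcomp Require Import all_boot.
Set Implicit Arguments. Unset Strict Implicit. Unset Printing Implicit Defensive.

(* A letter (x, false) stands for x, (x, true) for x^{-1}. *)
Definition word (X : Type) := seq (X * bool).

Definition inv_letter {X : Type} (l : X * bool) : X * bool := (l.1, ~~ l.2).
Definition inv_word {X : Type} (w : word X) : word X := rev (map inv_letter w).

(* The congruence on words defining the group <X | R>:
   u ~ v iff u and v represent the same element of F(X)/<<R>>. *)
Inductive eqv {X : Type} (R : word X -> Prop) : word X -> word X -> Prop :=
  | eqv_refl  : forall u, eqv R u u
  | eqv_sym   : forall u v, eqv R u v -> eqv R v u
  | eqv_trans : forall u v w, eqv R u v -> eqv R v w -> eqv R u w
  | eqv_cancel : forall u v (l : X * bool),
      eqv R (u ++ l :: inv_letter l :: v) (u ++ v)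
  | eqv_rel : forall u v r, R r -> eqv R (u ++ r ++ v) (u ++ v).

Definition presented_iso {X Y : Type} (R : word X -> Prop) (S : word Y -> Prop) : Prop :=
  exists (phi : word X -> word Y) (psi : word Y -> word X),
    (forall u v, eqv R u v -> eqv S (phi u) (phi v)) /\
    (forall u v, eqv S u v -> eqv R (psi u) (psi v)) /\
    (forall u v, eqv S (phi (u ++ v)) (phi u ++ phi v)) /\
    (forall u v, eqv R (psi (u ++ v)) (psi u ++ psi v)) /\
    (forall u, eqv R (psi (phi u)) u) /\
    (forall v, eqv S (phi (psi v)) v).

Definition gen {X : Type} (x : X) : X * bool := (x, false).
Definition ginv {X : Type} (x : X) : X * bool := (x, true).
Definition commutator {X : Type} (x y : X) : word X :=
  [:: gen x; gen y; ginv x; ginv y].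

(* Generators a_{ij}: 2-element subsets {i,j} of {1..N}, stored as (i,j), i<j. *)
Definition pairs (N : nat) :=
  {p : nat * nat | (1 <= p.1) && (p.1 < p.2) && (p.2 <= N)}.

Definition is_pair {N : nat} (x : pairs N) (i j : nat) : bool :=
  (val x == (i, j)) || (val x == (j, i)).

Definition distinct3 (i j k : nat) : bool := [&& i != j, i != k & j != k].
Definition distinct4 (i j k l : nat) : bool :=
  [&& i != j, i != k, i != l, j != k, j != l & k != l].

Inductive GN_rel (N : nat) : word (pairs N) -> Prop :=
  | GN_sq : forall x : pairs N, GN_rel [:: gen x; gen x]
  | GN_far : forall (i j k l : nat) (x y : pairs N),
      distinct4 i j k l -> is_pair x i j -> is_pair y k l ->
      GN_rel (commutator x y)
  | GN_tetra : forall (i j k : nat) (x y z : pairs N),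
      distinct3 i j k -> is_pair x i j -> is_pair y i k -> is_pair z j k ->
      (* a_ij a_ik a_jk = a_jk a_ik a_ij *)
      GN_rel [:: gen x; gen y; gen z; ginv x; ginv y; ginv z].

Definition idx (n : nat) := {i : nat | (1 <= i) && (i <= n)}.

(* Generators of G_{n,D}^2: a_{ij} (inl) and tau_i (inr). *)
Definition GnD_gen (n : nat) := (pairs n + idx n)%type.

Inductive GnD_rel (n : nat) : word (GnD_gen n) -> Prop :=
  | GnD_a : forall w : word (pairs n), GN_rel w ->
      GnD_rel (map (fun l => (inl l.1, l.2)) w)
  | GnD_tsq : forall t : idx n, GnD_rel [:: gen (inr t); gen (inr t)]
  | GnD_tcomm : forall s t : idx n, GnD_rel (commutator (inr s) (inr t))
  | GnD_tat : forall (s t : idx n) (x : pairs n), is_pair x (val s) (val t) ->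
      GnD_rel [:: gen (inr s); gen (inr t); gen (inl x); gen (inr t); gen (inr s);
                  ginv (inl x)]
  | GnD_atau : forall (i j : nat) (x : pairs n) (t : idx n),
      distinct3 i j (val t) -> is_pair x i j ->
      GnD_rel (commutator (inl x) (inr t)).

(* G_{n+1}^2 / N: add the relators a_{i(n+1)} a_{j(n+1)} a_{i(n+1)}^-1 a_{j(n+1)}^-1,
   1 <= i, j <= n (the normal closure of a set of elements is killed by adding
   them as relators). *)
Inductive GquotN_rel (n : nat) : word (pairs n.+1) -> Prop :=
  | GQ_G : forall w, GN_rel w -> GquotN_rel w
  | GQ_N : forall (x y : pairs n.+1),
      (val x).2 = n.+1 -> (val y).2 = n.+1 -> GquotN_rel (commutator x y).

(* The map a_ij |-> a_ij, tau_i |-> a_{i(n+1)} is a bijection between the generating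
   sets, so both directions of the isomorphism are renamings of generators and it suffices
   to check that each relator is sent to a trivial word.  Modulo N the a_{i(n+1)} commute,
   matching tau_i tau_j = tau_j tau_i, and the relation a_ij tau_k = tau_k a_ij is the far
   commutativity of a_ij and a_{k(n+1)}.  Since every generator is an involution on both
   sides, each tetrahedron relation on {i, j, n+1} is, up to a cyclic rotation and one
   commutation tau_i tau_j = tau_j tau_i, the relation tau_i tau_j a_ij tau_j tau_i = a_ij. *)

From Stdlib Require Import Morphisms.
From mathcomp Require Import all_boot zify.

#[export] Hint Resolve eqv_refl : core.

Definition tetra_word {X : Type} (x y z : X) : word X :=
  [:: gen x; gen y; gen z; ginv x; ginv y; ginv z].

Definition reflection_word {X : Type} (a s t : X) : word X :=
  [:: gen s; gen t; gen a; gen t; gen s; ginv a].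

Section Presentations.
Context {X : Type} {R : word X -> Prop}.
Local Notation eqv := (eqv R).

Lemma inv_letterK : involutive (@inv_letter X).
Proof. by case=> x b; rewrite /inv_letter /= negbK. Qed.

Lemma inv_word_cat (u v : word X) : inv_word (u ++ v) = inv_word v ++ inv_word u.
Proof. by rewrite /inv_word map_cat rev_cat. Qed.

Lemma inv_word_cons l (w : word X) : inv_word (l :: w) = inv_word w ++ [:: inv_letter l].
Proof. by rewrite -cat1s inv_word_cat. Qed.

Lemma inv_wordK : involutive (@inv_word X).
Proof. by move=> w; rewrite /inv_word map_rev revK -map_comp (eq_map inv_letterK) map_id. Qed.

Global Instance eqv_Equivalence : Equivalence eqv.
Proof. split; [exact: eqv_refl | exact: eqv_sym | exact: eqv_trans]. Qed.

Lemma eqv_in_context (a b : word X) {u v} : eqv u v -> eqv (a ++ u ++ b) (a ++ v ++ b).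
Proof.
elim=> {u v} [u | u v _ | u v w _ uv _ vw | u v l | u v r Rr].
- by [].
- by symmetry.
- by transitivity (a ++ v ++ b).
- by have := eqv_cancel R (a ++ u) (v ++ b) l; rewrite -!catA.
- by have := eqv_rel (a ++ u) (v ++ b) Rr; rewrite -!catA.
Qed.

Global Instance cat_eqv : Proper (eqv ==> eqv ==> eqv) cat.
Proof.
move=> u u' uu' v v' vv'; transitivity (u' ++ v).
- by have := eqv_in_context [::] v uu'.
- by have := eqv_in_context u' [::] vv'; rewrite !cats0.
Qed.

Global Instance cons_eqv : Proper (eq ==> eqv ==> eqv) cons.
Proof. by move=> l _ <- u v uv; rewrite -(cat1s l u) uv. Qed.

Lemma relator_trivial {r} : R r -> eqv r [::].
Proof. by move=> Rr; have := eqv_rel [::] [::] Rr; rewrite cats0. Qed.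

Lemma cat_inv_word w : eqv (w ++ inv_word w) [::].
Proof.
elim: w => [|l w IHw] //=.
by rewrite inv_word_cons catA IHw; exact: (eqv_cancel R [::] [::] l).
Qed.

Lemma inv_relator_trivial {r} : R r -> eqv (inv_word r) [::].
Proof.
move=> Rr; have := eqv_rel (inv_word r) [::] Rr; rewrite !cats0 => <-.
by have := cat_inv_word (inv_word r); rewrite inv_wordK.
Qed.

Global Instance inv_word_eqv : Proper (eqv ==> eqv) inv_word.
Proof.
move=> u v; elim=> {u v} [u | u v _ | u v w _ uv _ vw | u v l | u v r Rr].
- by [].
- by symmetry.
- by transitivity (inv_word v).
- rewrite !inv_word_cat !inv_word_cons inv_letterK -!catA.
  exact: eqv_cancel.
- by rewrite !inv_word_cat (inv_relator_trivial Rr) cats0.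
Qed.

Lemma trivial_rot k w : eqv (rot k w) [::] <-> eqv w [::].
Proof.
suff rotP p q : eqv (p ++ q) [::] -> eqv (q ++ p) [::].
  by rewrite /rot -{3}(cat_take_drop k w); split; exact: rotP.
move=> pq; transitivity (q ++ (p ++ q) ++ inv_word q); last by rewrite pq cat_inv_word.
by rewrite !catA -(catA (q ++ p)) cat_inv_word cats0.
Qed.

Lemma ginv_genK x w : eqv (ginv x :: gen x :: w) w.
Proof. exact: (eqv_cancel R [::] w (ginv x)). Qed.

Section Involution.
Context {x : X}.
Hypothesis x2 : eqv [:: gen x; gen x] [::].

Lemma gen_involution w : eqv (gen x :: gen x :: w) w.
Proof. by rewrite -[_ :: _]/([:: gen x; gen x] ++ w) x2. Qed.

Lemma ginv_gen w : eqv (ginv x :: w) (gen x :: w).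
Proof. by rewrite -{1}(gen_involution w) ginv_genK. Qed.

End Involution.

Lemma commute_gen {x y} : eqv (commutator x y) [::] ->
  forall w, eqv (gen x :: gen y :: w) (gen y :: gen x :: w).
Proof.
move=> xy w; transitivity (commutator x y ++ gen y :: gen x :: w); last by rewrite xy.
by rewrite /= !ginv_genK.
Qed.

Lemma commutator_sym {x y} : eqv (commutator x y) [::] -> eqv (commutator y x) [::].
Proof. by move=> xy; rewrite -[commutator y x]/(inv_word (commutator x y)) xy. Qed.

Section Reflection.
Context {a s t : X}.
Hypotheses (a2 : eqv [:: gen a; gen a] [::]) (s2 : eqv [:: gen s; gen s] [::])
  (t2 : eqv [:: gen t; gen t] [::]) (st : eqv (commutator s t) [::]).

Lemma tetra_reflectionE : eqv (tetra_word a s t) [::] <-> eqv (reflection_word a s t) [::].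
Proof.
rewrite /tetra_word /reflection_word !(ginv_gen a2) !(ginv_gen s2) !(ginv_gen t2).
by rewrite -(trivial_rot 1) /rot /= (commute_gen st [:: gen a]).
Qed.

Lemma tetra_word_sat : eqv (reflection_word a s t) [::] -> eqv (tetra_word s a t) [::].
Proof.
rewrite /tetra_word /reflection_word !(ginv_gen a2) !(ginv_gen s2) !(ginv_gen t2).
by move=> refl; rewrite -(trivial_rot 5) /rot /= (commute_gen (commutator_sym st)).
Qed.

Lemma tetra_word_sta : eqv (reflection_word a s t) [::] -> eqv (tetra_word s t a) [::].
Proof.
rewrite /tetra_word /reflection_word !(ginv_gen a2) !(ginv_gen s2) !(ginv_gen t2).
by rewrite (commute_gen st [:: gen a]).
Qed.

End Reflection.

End Presentations.

Definition rename {X Y : Type} (h : X -> Y) (w : word X) : word Y :=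
  map (fun l => (h l.1, l.2)) w.

Section Renaming.
Variables (X Y : Type) (h : X -> Y).

Lemma rename_cat u v : rename h (u ++ v) = rename h u ++ rename h v.
Proof. exact: map_cat. Qed.

Lemma renameK (h' : Y -> X) : cancel h h' -> cancel (rename h) (rename h').
Proof. by move=> hK; elim=> //= [[x b] w ->]; rewrite hK. Qed.

Lemma rename_eqv (R : word X -> Prop) (S : word Y -> Prop) :
    (forall r, R r -> eqv S (rename h r) [::]) ->
  forall u v, eqv R u v -> eqv S (rename h u) (rename h v).
Proof.
move=> hR u v; elim=> {u v} [u | u v _ | u v w _ uv _ vw | u v l | u v r Rr].
- by [].
- by symmetry.
- by transitivity (rename h v).
- by rewrite !rename_cat; exact: eqv_cancel.
- by rewrite !rename_cat (hR _ Rr).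
Qed.

End Renaming.

Lemma presented_iso_rename {X Y : Type} {R : word X -> Prop} {S : word Y -> Prop}
    (h : X -> Y) (h' : Y -> X) :
    cancel h h' -> cancel h' h ->
    (forall r, R r -> eqv S (rename h r) [::]) ->
    (forall r, S r -> eqv R (rename h' r) [::]) ->
  presented_iso R S.
Proof.
move=> hK h'K hR h'S; exists (rename h), (rename h').
split; first exact: rename_eqv.
split; first exact: rename_eqv.
by do ![split] => *; rewrite ?rename_cat ?renameK.
Qed.

Section Quotient.
Variable n : nat.
Local Notation gnd := (@GnD_rel n).
Local Notation quot := (@GquotN_rel n).

Lemma lift_pair_subproof (p : pairs n) :
  (1 <= (val p).1) && ((val p).1 < (val p).2) && ((val p).2 <= n.+1).
Proof. by have := valP p; lia. Qed.

Definition lift_pair (p : pairs n) : pairs n.+1 := exist _ (val p) (lift_pair_subproof p).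

Lemma last_pair_subproof (t : idx n) : (1 <= val t) && (val t < n.+1) && (n.+1 <= n.+1).
Proof. by have := valP t; lia. Qed.

Definition last_pair (t : idx n) : pairs n.+1 :=
  exist _ (val t, n.+1) (last_pair_subproof t).

Definition pair_of_gen (x : GnD_gen n) : pairs n.+1 :=
  match x with inl p => lift_pair p | inr t => last_pair t end.

Lemma pair_fst_subproof (p : pairs n.+1) : (1 <= (val p).1) && ((val p).1 <= n).
Proof. by have := valP p; lia. Qed.

Definition gen_of_pair (p : pairs n.+1) : GnD_gen n :=
  if insub (val p) is Some q then inl q else inr (exist _ (val p).1 (pair_fst_subproof p)).

Lemma pair_of_genK : cancel pair_of_gen gen_of_pair.
Proof.
case=> [q | t]; rewrite /gen_of_pair /=; first by rewrite valK.
rewrite insubF; first by congr inr; apply: val_inj.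
by rewrite /= ltnn andbF.
Qed.

Lemma gen_of_pairK : cancel gen_of_pair pair_of_gen.
Proof.
move=> [[a b] ab]; rewrite /gen_of_pair.
case: insubP => [q _ /= qab | /= nab]; apply: val_inj => //=.
by congr pair; move: ab nab => /=; lia.
Qed.

Variant pair_spec : pairs n.+1 -> GnD_gen n -> Type :=
  | PairLift q : pair_spec (lift_pair q) (inl q)
  | PairLast t : pair_spec (last_pair t) (inr t).

Lemma pairP p : pair_spec p (gen_of_pair p).
Proof. by rewrite -{1}(gen_of_pairK p); case: (gen_of_pair p) => [q|t]; constructor. Qed.

Lemma is_pair_lift (q : pairs n) i j :
  is_pair (lift_pair q) i j -> [&& 0 < i <= n, 0 < j <= n & i != j].
Proof. by case: q => [[a b] /= ab]; rewrite /is_pair /= => /orP[] /eqP[<- <-]; lia. Qed.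

Lemma is_pair_last (t : idx n) i j : is_pair (last_pair t) i j ->
  [&& 0 < val t <= n & (i == val t) && (j == n.+1) || (i == n.+1) && (j == val t)].
Proof. by case: t => [a ha]; rewrite /is_pair /= => /orP[] /eqP[<- <-]; lia. Qed.

Lemma lift_GN_rel w : @GN_rel n w -> @GN_rel n.+1 (rename lift_pair w).
Proof.
case=> [x | i j k l x y ijkl xij ykl | i j k x y z ijk xij yik zjk].
- exact: GN_sq.
- exact: (GN_far (x := lift_pair x) (y := lift_pair y) ijkl xij ykl).
- exact: (GN_tetra (x := lift_pair x) (y := lift_pair y) (z := lift_pair z) ijk xij yik zjk).
Qed.

Lemma quot_sq x : eqv quot [:: gen x; gen x] [::].
Proof. exact/relator_trivial/GQ_G/GN_sq. Qed.

Lemma quot_last_commute s t : eqv quot (commutator (last_pair s) (last_pair t)) [::].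
Proof. exact/relator_trivial/GQ_N. Qed.

Lemma pair_of_gen_relator r : gnd r -> eqv quot (rename pair_of_gen r) [::].
Proof.
case=> [w Rw | t | s t | s t x xst | i j x t ijt xij].
- by rewrite /rename -map_comp; exact/relator_trivial/GQ_G/lift_GN_rel.
- exact: quot_sq.
- exact: quot_last_commute.
- change (eqv quot (reflection_word (lift_pair x) (last_pair s) (last_pair t)) [::]).
  apply/(tetra_reflectionE (quot_sq _) (quot_sq _) (quot_sq _) (quot_last_commute s t)).
  have /is_pair_lift st_bounds := xst.
  apply/relator_trivial/GQ_G.
  apply: (GN_tetra (k := n.+1) (x := lift_pair x) (y := last_pair s) (z := last_pair t) _ xst);
    rewrite ?/is_pair ?eqxx //.
  by move: st_bounds; rewrite /distinct3; lia.
- apply/relator_trivial/GQ_G.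
  apply: (GN_far (k := val t) (l := n.+1) (x := lift_pair x) (y := last_pair t) _ xij);
    last by rewrite /is_pair eqxx.
  have /is_pair_lift := xij; have := valP t; move: ijt; rewrite /distinct3 /distinct4; lia.
Qed.

Lemma gnd_sq x : eqv gnd [:: gen x; gen x] [::].
Proof.
by case: x => [q|t]; apply: relator_trivial; [exact: (GnD_a (GN_sq q)) | exact: GnD_tsq].
Qed.

Lemma gnd_tau_commute s t : eqv gnd (commutator (inr s) (inr t)) [::].
Proof. exact/relator_trivial/GnD_tcomm. Qed.

Lemma gen_of_pair_far i j k l (x y : pairs n.+1) :
    distinct4 i j k l -> is_pair x i j -> is_pair y k l ->
  eqv gnd (rename gen_of_pair (commutator x y)) [::].
Proof.
rewrite /distinct4 /= => ijkl.
case: (pairP x) => [a|s]; case: (pairP y) => [b|t] xij ykl.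
- exact: relator_trivial (GnD_a (GN_far (x := a) (y := b) ijkl xij ykl)).
- apply/relator_trivial/(GnD_atau (i := i) (j := j)) => //.
  by have /is_pair_lift := xij; have /is_pair_last := ykl; rewrite /distinct3; lia.
- apply/commutator_sym/relator_trivial/(GnD_atau (i := k) (j := l)) => //.
  by have /is_pair_last := xij; have /is_pair_lift := ykl; rewrite /distinct3; lia.
- exact: gnd_tau_commute.
Qed.

Lemma gen_of_pair_tetra i j k (x y z : pairs n.+1) :
    distinct3 i j k -> is_pair x i j -> is_pair y i k -> is_pair z j k ->
  eqv gnd (rename gen_of_pair (tetra_word x y z)) [::].
Proof.
rewrite /distinct3 /= => ijk.
case: (pairP x) => [a|s]; case: (pairP y) => [b|t]; case: (pairP z) => [c|u].
- move=> xij yik zjk.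
  exact: relator_trivial (GnD_a (GN_tetra (x := a) (y := b) (z := c) ijk xij yik zjk)).
- by move=> /is_pair_lift ? /is_pair_lift ? /is_pair_last; lia.
- by move=> /is_pair_lift ? /is_pair_last ? /is_pair_lift; lia.
- move=> xij /is_pair_last ti /is_pair_last uj; have /is_pair_lift ij := xij.
  have [iE jE] : i = val t /\ j = val u by lia.
  rewrite {}iE {}jE in xij.
  apply/(tetra_reflectionE (gnd_sq _) (gnd_sq _) (gnd_sq _) (gnd_tau_commute t u)).
  exact/relator_trivial/GnD_tat.
- by move=> /is_pair_last ? /is_pair_lift ? /is_pair_lift; lia.
- move=> /is_pair_last si yik /is_pair_last uk; have /is_pair_lift ik := yik.
  have [iE kE] : i = val s /\ k = val u by lia.
  rewrite {}iE {}kE in yik.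
  apply: (tetra_word_sat (gnd_sq _) (gnd_sq _) (gnd_sq _) (gnd_tau_commute s u)).
  exact/relator_trivial/GnD_tat.
- move=> /is_pair_last sj /is_pair_last tk zjk; have /is_pair_lift jk := zjk.
  have [jE kE] : j = val s /\ k = val t by lia.
  rewrite {}jE {}kE in zjk.
  apply: (tetra_word_sta (gnd_sq _) (gnd_sq _) (gnd_sq _) (gnd_tau_commute s t)).
  exact/relator_trivial/GnD_tat.
- by move=> /is_pair_last ? /is_pair_last ? /is_pair_last; lia.
Qed.

Lemma gen_of_pair_relator r : quot r -> eqv gnd (rename gen_of_pair r) [::].
Proof.
case=> [w [x | i j k l x y ijkl xij ykl | i j k x y z ijk xij yik zjk] | x y xn yn].
- exact: gnd_sq.
- exact: gen_of_pair_far ijkl xij ykl.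
- exact: gen_of_pair_tetra ijk xij yik zjk.
- rewrite /=; case: (pairP x) xn => [[[a b] /= ab] /= bn | s _]; first lia.
  case: (pairP y) yn => [[[a b] /= ab] /= bn | t _]; first lia.
  exact: gnd_tau_commute.
Qed.

End Quotient.

Theorem mainTheorem8 (n : nat) : 2 < n ->
  presented_iso (@GnD_rel n) (@GquotN_rel n).
Proof.
move=> _; apply: (presented_iso_rename (@pair_of_gen n) (@gen_of_pair n)).
- exact: pair_of_genK.
- exact: gen_of_pairK.
- exact: pair_of_gen_relator.
- exact: gen_of_pair_relator.
Qed.
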